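(* Let $n\ge1$. If $2\le m\le\infty$, then $c_{\pi s,s+}(n,\ell_1^m)=\gamma(n)$. Consequently, $$\sup_E\frac{c_{\pi s,s+}(n,E)}{c_+(E)^n}=\sup_{E:\,c_+(E)=1}c_{\pi s,s+}(n,E)=c_{\pi s,s+}(n,\ell_1)=c_{\pi s,s+}(n,\ell_1^2)=\gamma(n),$$ where the suprema are over all ordered normed spaces $E$.
   Context: All vector spaces are real. An ordered normed space is a real normed space $E$ together with a closed convex cone $E_+\subseteq E$ (positive elements) such that $E=E_+-E_+$ and such that, writing $\|x\|_+:=\inf\{\|y\|+\|z\|: x=y-z,\ y,z\in E_+\}$, the constant $c_+(E):=\sup\{\|x\|_+:\|x\|\le1\}$ is finite; $E^+$ denotes $E$ with the norm $\|\cdot\|_+$. $E^{\vee n}$ is the space of symmetric tensors in the algebraic tensor power $E^{\otimes n}$, and $x^{\otimes n}:=x\otimes\cdots\otimes x$. For a normed space $F$, $\|\mathbf{x}\|_{\pi s,F}:=\inf\{\sum_k|a_k|\,\|x_k\|^n : \mathbf{x}=\sum_k a_k x_k^{\otimes n},\ x_k\in F\}$, and for an ordered normed space $E$, $\|\mathbf{x}\|_{\pi s+,E}:=\inf\{\sum_k|a_k|\,\|x_k\|^n : \mathbf{x}=\sum_k a_k x_k^{\otimes n},\ x_k\in E_+\}$ (finite sums, $a_k\in\mathbb{R}$). $c_{\pi s,s+}(n,E):=\sup\{\|\mathbf{x}\|_{\pi s+,E}/\|\mathbf{x}\|_{\pi s,E}:0\ne\mathbf{x}\in E^{\vee n}\}$.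 $\gamma(n)$ is the smallest constant $C$ such that $\|\mathbf{x}\|_{\pi s+,E}\le C\,\|\mathbf{x}\|_{\pi s,E^+}$ for every ordered normed space $E$ and every $\mathbf{x}\in E^{\vee n}$ (such finite constants exist). $\ell_1^m$ ($1\le m<\infty$) is $\mathbb{R}^m$ with the $\ell_1$-norm, $\ell_1^\infty=\ell_1$, ordered coordinatewise. *)

From HB Require Import structures.
From mathcomp Require Import all_boot all_order all_algebra all_fingroup.
From mathcomp Require Import boolp classical_sets functions reals ereal.
Set Implicit Arguments. Unset Strict Implicit. Unset Printing Implicit Defensive.
Import Order.TTheory GRing.Theory Num.Theory.
Local Open Scope ring_scope.
Local Open Scope classical_set_scope.

Section OrderedNormedSpaces.
Variable R : realType.

Record ons := ONS {
  ons_car :> lmodType R;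
  ons_norm : ons_car -> R;
  ons_cone : set ons_car }.
Arguments ons_norm : clear implicits.
Arguments ons_cone : clear implicits.

Definition is_norm (V : lmodType R) (N : V -> R) : Prop :=
  [/\ forall x, 0 <= N x,
      forall x, N x = 0 -> x = 0,
      forall (a : R) x, N (a *: x) = `|a| * N x
    & forall x y, N (x + y) <= N x + N y].

Definition is_closed_convex_cone (V : lmodType R) (N : V -> R) (P : set V) :=
  [/\ P 0,
      forall x y, P x -> P y -> P (x + y),
      forall (a : R) x, 0 <= a -> P x -> P (a *: x)
    & forall x, (forall e : R, 0 < e -> exists2 p, P p & N (x - p) < e) -> P x].

Definition pnorm (E : ons) (x : E) : R :=
  inf [set r | exists y z : E, [/\ ons_cone E y, ons_cone E z, x = y - z
                             & r = ons_norm E y + ons_norm E z]].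

Definition cplus (E : ons) : R :=
  sup [set pnorm x | x in [set x : E | ons_norm E x <= 1]].

Definition is_ons (E : ons) : Prop :=
  [/\ is_norm (ons_norm E),
      is_closed_convex_cone (ons_norm E) (ons_cone E),
      (forall x : E, exists y z : E, [/\ ons_cone E y, ons_cone E z & x = y - z])
    & exists C : R, forall x : E, ons_norm E x <= 1 -> pnorm x <= C].

(* An element of the algebraic tensor power E^{(x)n} is represented by a
   finite formal sum  sum_k a_k x_{k,1} (x) ... (x) x_{k,n};  two such sums
   denote the same tensor iff they induce the same n-linear form on
   (E^#)^n, E^# the algebraic dual (canonical injection E^{(x)n} ->
   multilinear forms on (E^#)^n). *)
Section Tensors.
Variable V : lmodType R.

Definition lin (f : V -> R) : Prop :=
  forall (a : R) x y, f (a *: x + y) = a * f x + f y.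

Definition tensor (n : nat) := seq (R * ('I_n -> V)).

Definition tform n (t : tensor n) (phi : 'I_n -> V -> R) : R :=
  \sum_(p <- t) p.1 * \prod_(i < n) phi i (p.2 i).

Definition teq n (t1 t2 : tensor n) : Prop :=
  forall phi : 'I_n -> V -> R, (forall i, lin (phi i)) ->
    tform t1 phi = tform t2 phi.

Definition tsym n (t : tensor n) : Prop :=
  forall (s : 'S_n) (phi : 'I_n -> V -> R), (forall i, lin (phi i)) ->
    tform t (fun i => phi (s i)) = tform t phi.

Definition powt n (s : seq (R * V)) : tensor n :=
  [seq (p.1, fun _ : 'I_n => p.2) | p <- s].

Definition pis n (N : V -> R) (Q : set V) (t : tensor n) : \bar R :=
  ereal_inf [set (\sum_(p <- s) `|p.1| * N p.2 ^+ n)%:E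
            | s in [set s : seq (R * V) |
                     (forall p, p \in s -> Q p.2) /\ teq (powt n s) t]].
End Tensors.

Definition pis_E (E : ons) n (t : tensor E n) := pis (ons_norm E) setT t.
Definition pisplus_E (E : ons) n (t : tensor E n) := pis (ons_norm E) (ons_cone E) t.
Definition pis_Eplus (E : ons) n (t : tensor E n) := pis (@pnorm E) setT t.

Definition c_piss (n : nat) (E : ons) : \bar R :=
  ereal_sup [set (pisplus_E t * ((fine (pis_E t))^-1)%:E)%E
            | t in [set t : tensor E n | tsym t /\ ~ teq t [::]]].

Definition gamma_ok (n : nat) (C : R) : Prop :=
  forall E : ons, is_ons E -> forall t : tensor E n, tsym t ->
    (pisplus_E t <= C%:E * pis_Eplus t)%E.

Definition gamma (n : nat) : \bar R := ereal_inf [set C%:E | C in gamma_ok n].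

Definition l1m (m : nat) : ons :=
  @ONS ('rV[R]_m) (fun x => \sum_(i < m) `|x ord0 i|)
       [set x | forall i, 0 <= x ord0 i].

Definition l1pred : {pred nat -> R^o} :=
  fun x => `[< exists M : R, forall N, \sum_(k < N) `|x k| <= M >].

Lemma l1_closed : GRing.submod_closed l1pred.
Proof.
split.
  by rewrite unfold_in; apply/asboolP; exists 0 => N; rewrite big1 // => k _; rewrite normr0.
move=> a u v; rewrite !unfold_in => /asboolP [M1 H1] /asboolP [M2 H2].
apply/asboolP.
exists (`|a| * M1 + M2) => N.
apply: (@le_trans _ _ (\sum_(k < N) (`|a| * `|u k| + `|v k|))).
  apply: ler_sum => k _.
  have -> : (a *: u + v) k = a * u k + v k by [].
  by apply: (le_trans (ler_normD _ _)); rewrite normrM.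
rewrite big_split /= -mulr_sumr.
by apply: lerD; [apply: ler_wpM2l => //; exact: H1 | exact: H2].
Qed.

HB.instance Definition _ := GRing.isSubmodClosed.Build R (nat -> R^o) l1pred l1_closed.
Record l1_type := L1 { l1val : nat -> R^o; _ : l1val \in l1pred }.
HB.instance Definition _ := [isSub for l1val].
HB.instance Definition _ := [Choice of l1_type by <:].
HB.instance Definition _ := [SubChoice_isSubLmodule of l1_type by <:].

Definition l1 : ons :=
  @ONS l1_type (fun x => sup [set \sum_(k < N) `|l1val x k| | N in [set: nat]])
       [set x | forall k, 0 <= l1val x k].

Definition sup_ratio (n : nat) : \bar R :=
  ereal_sup [set r | exists E : ons,
                     is_ons E /\ r = (c_piss n E * ((cplus E ^+ n)^-1)%:E)%E].

Definition sup_cplus1 (n : nat) : \bar R :=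
  ereal_sup [set r | exists E : ons, [/\ is_ons E, cplus E = 1 & r = c_piss n E]].

End OrderedNormedSpaces.

From HB Require Import structures.
From mathcomp Require Import all_boot all_order all_algebra all_fingroup.
From mathcomp Require Import boolp classical_sets functions reals ereal.
From mathcomp Require Import ring lra.
Import Order.TTheory GRing.Theory Num.Theory.
Local Open Scope ring_scope.
Local Open Scope classical_set_scope.
Set Implicit Arguments. Unset Strict Implicit. Unset Printing Implicit Defensive.

(* Let x be an element of an ordered normed space E and x = y - z with y, z
   positive and ||y|| + ||z|| close to ||x||_+.  The map
   T (a, b) = a y / ||y|| + b z / ||z|| is a positive contraction from l_1^2
   into E sending w = (||y||, - ||z||), of norm ||y|| + ||z||, to x.  Positive
   contractions do not increase the pi_{s+} norm of w^{(x)n}, hence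
   ||x^{(x)n}||_{pi s+, E} <= c_{pi s, s+}(n, l_1^2) ||x||_+^n, and by
   subadditivity c_{pi s, s+}(n, l_1^2) is an admissible constant for gamma(n).
   Conversely ||.||_+ = ||.|| on l_1^2, so every admissible constant bounds
   c_{pi s, s+}(n, l_1^2).  Only two positive functionals f_0, f_1 with
   |f_0| + |f_1| <= ||.|| and two unit vectors biorthogonal to them are used,
   so the argument applies verbatim to l_1^m (m >= 2) and to l_1.  The
   suprema follow from c_{pi s, s+}(n, E) <= gamma(n) c_+(E)^n, itself a
   consequence of ||.||_{pi s, E^+} <= c_+(E)^n ||.||_{pi s, E}. *)

Section RealFacts.
Variable R : realType.

Lemma exprD_subr_le (p d : R) k : 0 <= p -> 0 <= d <= 1 ->
  (p + d) ^+ k - p ^+ k <= d * (k%:R * (p + 1) ^+ k.-1).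
Proof.
move=> p0 /andP[d0 d1]; rewrite subrXX [p + d - p]addrC addKr ler_wpM2l //.
have -> : k%:R * (p + 1) ^+ k.-1 = \sum_(i < k) (p + 1) ^+ k.-1.
  by rewrite sumr_const card_ord mulr_natl.
apply: ler_sum => i _.
have ik : (i <= k.-1)%N by rewrite -ltnS (leq_trans (ltn_ord i)) // leqSpred.
rewrite -[in X in _ <= X](subnK ik) exprD.
by apply: ler_pM; rewrite ?exprn_ge0 ?addr_ge0 //; apply: lerXn2r;
  rewrite ?nnegrE ?addr_ge0 ?lerD2l ?lerDl.
Qed.

Lemma lee_exprD_limit (x : \bar R) (p C : R) (k : nat) : 0 <= p -> 0 <= C ->
  (forall d, 0 < d -> (x <= (C * (p + d) ^+ k)%:E)%E) -> (x <= (C * p ^+ k)%:E)%E.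
Proof.
move=> p0 C0 H; apply/lee_addgt0Pr => e e0.
set K := C * (k%:R * (p + 1) ^+ k.-1) + 1.
have K0 : 0 < K by rewrite ltr_wpDl // mulr_ge0 // mulr_ge0 // exprn_ge0 // addr_ge0.
set d := Num.min 1 (e / K).
have d0 : 0 < d by rewrite lt_min ltr01 divr_gt0.
have d1 : 0 <= d <= 1 by rewrite ltW //= ge_min lexx.
apply: (le_trans (H d d0)); rewrite -EFinD lee_fin -lerBlDl -mulrBr.
apply: (le_trans (ler_wpM2l C0 (exprD_subr_le k p0 d1))).
have dK : d * K <= e by rewrite -ler_pdivlMr // ge_min lexx orbT.
apply: le_trans dK; rewrite /K mulrDr mulr1 mulrCA lerDl; exact: ltW.
Qed.

Lemma le_mul_ereal_inf T (S : set T) (f : T -> R) (x : \bar R) (c : R) : 0 < c ->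
  (forall s, S s -> (x <= (c * f s)%:E)%E) ->
  (x <= c%:E * ereal_inf [set (f s)%:E | s in S])%E.
Proof.
move=> c0 H; rewrite muleC -lee_pdivrMr //; apply: le_ereal_inf_tmp => _ [s Ss <-].
by rewrite lee_pdivrMr // -EFinM mulrC; exact: H.
Qed.

Definition pos_part (a : R) := (a + `|a|) / 2.
Definition neg_part (a : R) := (`|a| - a) / 2.

Lemma pos_neg_part (a : R) :
  [/\ 0 <= pos_part a, 0 <= neg_part a, pos_part a - neg_part a = a
    & pos_part a + neg_part a = `|a|].
Proof.
have h1 := ler_norm a; have h2 : - a <= `|a| by rewrite -normrN ler_norm.
by rewrite /pos_part /neg_part; split; try field; rewrite // divr_ge0 //; lra.
Qed.

Lemma ge0_of_approx_ge0 (a : R) :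
  (forall e, 0 < e -> exists2 b, 0 <= b & `|a - b| < e) -> 0 <= a.
Proof.
move=> H; rewrite leNgt; apply/negP => a0.
have [b b0 ab] : exists2 b, 0 <= b & `|a - b| < - a by apply: H; rewrite oppr_gt0.
by have := ler_norm (- (a - b)); rewrite normrN; lra.
Qed.

End RealFacts.

Section PowerTensors.
Variables (R : realType) (V : lmodType R) (n : nat).
Implicit Types (s : seq (R * V)) (t : tensor V n) (phi : 'I_n -> V -> R).

Lemma lin0 (f : V -> R) : lin f -> f 0 = 0.
Proof. by move=> lf; have := lf 1 0 0; rewrite scaler0 addr0 mul1r; lra. Qed.

Lemma linZ (f : V -> R) (a : R) x : lin f -> f (a *: x) = a * f x.
Proof. by move=> lf; rewrite -[a *: x]addr0 lf lin0 // addr0. Qed.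

Lemma linB (f : V -> R) x y : lin f -> f (x - y) = f x - f y.
Proof.
move=> lf; have := lf (-1) y x; rewrite scaleN1r addrC => ->.
by rewrite mulN1r addrC.
Qed.

Lemma tform_powt s phi :
  tform (powt n s) phi = \sum_(p <- s) p.1 * \prod_(i < n) phi i p.2.
Proof. by rewrite /tform /powt big_map. Qed.

Lemma tform_powt1 (w : V) (g : V -> R) :
  tform (powt n [:: (1%R, w)]) (fun=> g) = g w ^+ n.
Proof. by rewrite tform_powt big_seq1 mul1r prodr_const card_ord. Qed.

Lemma tsym_powt s : tsym (powt n s).
Proof.
move=> sg phi _; rewrite !tform_powt; apply: eq_bigr => p _; congr (_ * _).
by rewrite [RHS](reindex_inj (@perm_inj _ sg)).
Qed.

Lemma teq_powt0 (a : R) : (0 < n)%N -> teq (powt n [:: (a, 0 : V)]) [::].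
Proof.
move=> n0 phi lphi; rewrite tform_powt big_seq1 /tform big_nil.
by rewrite (bigD1 (Ordinal n0)) //= lin0 // mul0r mulr0.
Qed.

Definition rep_cost (N : V -> R) s := \sum_(p <- s) `|p.1| * N p.2 ^+ n.

Definition is_rep (Q : set V) t s := (forall p, p \in s -> Q p.2) /\ teq (powt n s) t.

Section ProjectiveSymmetricNorm.
Variables (N : V -> R) (Q : set V).

Lemma pis_le_cost t s : is_rep Q t s -> (pis N Q t <= (rep_cost N s)%:E)%E.
Proof. by move=> rs; apply: ereal_inf_lbound; exists s. Qed.

Lemma pis_teq0 t : teq t [::] -> (pis N Q t <= 0%:E)%E.
Proof.
move=> t0; apply: le_trans (pis_le_cost (s := [::]) _) _.
  by split=> [p|phi lphi]; rewrite ?in_nil // t0.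
by rewrite /rep_cost big_nil.
Qed.

Lemma pis_leP t (b : R) : (pis N Q t <= b%:E)%E <->
  (forall e, 0 < e -> exists2 s, is_rep Q t s & rep_cost N s < b + e).
Proof.
split=> [tb e e0 | H].
  have tbe : (pis N Q t < (b + e)%:E)%E by apply: le_lt_trans tb _; rewrite lte_fin ltrDl.
  by have [_ [s rs <-]] := ereal_inf_lt tbe; exists s.
apply/lee_addgt0Pr => e /H [s rs cs].
by apply: (le_trans (pis_le_cost rs)); rewrite lee_fin ltW.
Qed.

Lemma pis_teq t1 t2 : teq t1 t2 -> pis N Q t1 = pis N Q t2.
Proof.
move=> t12; congr ereal_inf; apply/seteqP; split=> _ [s [Qs st] <-]; exists s => //.
  by split=> // phi lphi; rewrite st // t12.
by split=> // phi lphi; rewrite st // t12.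
Qed.

Lemma pis_powt1_le (w : V) : Q w -> (pis N Q (powt n [:: (1%R, w)]) <= (N w ^+ n)%:E)%E.
Proof.
move=> Qw; apply: le_trans (pis_le_cost (s := [:: (1%R, w)]) _) _.
  by split=> // p; rewrite inE => /eqP ->.
by rewrite /rep_cost big_seq1 normr1 mul1r.
Qed.

Lemma pis_powt1_ge (g : V -> R) (w : V) : lin g -> (forall v, `|g v| <= N v) ->
  ((`|g w| ^+ n)%:E <= pis N Q (powt n [:: (1%R, w)]))%E.
Proof.
move=> lg gN; apply: le_ereal_inf_tmp => _ [s [_ st] <-]; rewrite lee_fin.
rewrite -normrX; have := st (fun=> g) (fun=> lg).
rewrite tform_powt1 tform_powt => <-.
apply: (le_trans (ler_norm_sum _ _ _)); apply: ler_sum => p _.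
rewrite prodr_const card_ord normrM normrX ler_wpM2l //.
by apply: lerXn2r; rewrite ?nnegrE // (le_trans _ (gN p.2)).
Qed.

Lemma pis_powt_cat s1 s2 (b1 b2 : R) :
  (pis N Q (powt n s1) <= b1%:E)%E -> (pis N Q (powt n s2) <= b2%:E)%E ->
  (pis N Q (powt n (s1 ++ s2)) <= (b1 + b2)%:E)%E.
Proof.
move=> /pis_leP H1 /pis_leP H2; apply/pis_leP => e e0.
have [r1 [Q1 T1] c1] := H1 _ (divr_gt0 e0 (ltr0n _ 2)).
have [r2 [Q2 T2] c2] := H2 _ (divr_gt0 e0 (ltr0n _ 2)).
exists (r1 ++ r2).
  split=> [p|phi lphi]; first by rewrite mem_cat => /orP[/Q1|/Q2].
  by rewrite /powt !map_cat /tform !big_cat -!/(tform _ _) T1 // T2.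
rewrite /rep_cost big_cat /= -!/(rep_cost _ _).
by move: (splitr e) c1 c2; set h := e / 2; lra.
Qed.

Lemma pis_powt_scale (a : R) (x : V) (b : R) :
  (pis N Q (powt n [:: (1%R, x)]) <= b%:E)%E ->
  (pis N Q (powt n [:: (a, x)]) <= (`|a| * b)%:E)%E.
Proof.
move=> /pis_leP H; apply/pis_leP => e e0.
have ae : 0 < `|a| + 1 by rewrite ltr_wpDl.
have [r [Qr Tr] cr] := H _ (divr_gt0 e0 ae).
exists [seq (a * p.1, p.2) | p <- r].
  split=> [_ /mapP[p pr ->]|phi lphi]; first exact: Qr pr.
  have := Tr phi lphi; rewrite !tform_powt big_map !big_seq1 mul1r => <-.
  rewrite mulr_sumr.
  by apply: eq_bigr => p _; rewrite mulrA.
have -> : rep_cost N [seq (a * p.1, p.2) | p <- r] = `|a| * rep_cost N r.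
  by rewrite /rep_cost big_map mulr_sumr; apply: eq_bigr => p _; rewrite normrM mulrA.
apply: le_lt_trans (ler_wpM2l (normr_ge0 a) (ltW cr)) _.
rewrite mulrDr ltrD2l mulrA ltr_pdivrMr // mulrC ltr_pM2l //.
by rewrite ltrDl.
Qed.

Lemma pis_powt_le s (B : V -> R) :
  (forall p, p \in s -> (pis N Q (powt n [:: (1%R, p.2)]) <= (B p.2)%:E)%E) ->
  (pis N Q (powt n s) <= (\sum_(p <- s) `|p.1| * B p.2)%:E)%E.
Proof.
elim: s => [_|[a x] s IH Hs]; first by rewrite big_nil; exact: pis_teq0.
rewrite big_cons; apply: (pis_powt_cat (s1 := [:: (a, x)])).
  by apply: pis_powt_scale; apply: (Hs (a, x)); rewrite mem_head.
by apply: IH => p ps; apply: Hs; rewrite in_cons ps orbT.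
Qed.

Hypothesis N_ge0 : forall v, 0 <= N v.

Lemma rep_cost_ge0 s : 0 <= rep_cost N s.
Proof. by apply: sumr_ge0 => p _; rewrite mulr_ge0 ?exprn_ge0. Qed.

Lemma pis_ge0 t : (0 <= pis N Q t)%E.
Proof. by apply: le_ereal_inf_tmp => _ [s _ <-]; rewrite lee_fin rep_cost_ge0. Qed.

End ProjectiveSymmetricNorm.
End PowerTensors.

Section Transport.
Variables (R : realType) (V W : lmodType R) (n : nat).
Variables (NV : V -> R) (QV : set V) (NW : W -> R) (QW : set W) (T : V -> W).
Hypothesis NW_ge0 : forall w, 0 <= NW w.
Hypothesis T_lin : forall (c : R) v u, T (c *: v + u) = c *: T v + T u.
Hypothesis T_pos : forall v, QV v -> QW (T v).
Hypothesis T_contr : forall v, NW (T v) <= NV v.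

Lemma pis_map_le (s : seq (R * V)) :
  (pis NW QW (powt n [seq (p.1, T p.2) | p <- s]) <= pis NV QV (powt n s))%E.
Proof.
apply: le_ereal_inf_tmp => _ [r [Qr Tr] <-].
have linT (phi : 'I_n -> W -> R) :
    (forall i, lin (phi i)) -> forall i, lin (fun v => phi i (T v)).
  by move=> lphi i c v u; rewrite T_lin lphi.
apply: le_trans (pis_le_cost NW (s := [seq (p.1, T p.2) | p <- r]) _) _.
  split=> [_ /mapP[p pr ->]|phi lphi]; first exact: T_pos (Qr _ pr).
  have := Tr _ (linT _ lphi); rewrite !tform_powt !big_map.
  by congr (\sum_(_ <- _) _ = \sum_(_ <- _) _).
rewrite lee_fin /rep_cost big_map; apply: ler_sum => p _.
by rewrite ler_wpM2l //; apply: lerXn2r; rewrite ?nnegrE // (le_trans _ (T_contr _)).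
Qed.

End Transport.

Section OrderedNormedSpace.
Variables (R : realType) (E : ons R).
Hypothesis HE : is_ons E.
Local Notation N := (@ons_norm R E).
Local Notation P := (@ons_cone R E).
Implicit Types (x y z u : E).

Lemma onorm_ge0 x : 0 <= N x. Proof. by case: HE => -[]. Qed.
Lemma onorm_eq0 x : N x = 0 -> x = 0. Proof. by case: HE => -[_ + _ _] _ _ _; apply. Qed.
Lemma onormZ (a : R) x : N (a *: x) = `|a| * N x. Proof. by case: HE => -[]. Qed.
Lemma onormD x y : N (x + y) <= N x + N y. Proof. by case: HE => -[]. Qed.

Lemma onorm0 : N 0 = 0.
Proof. by rewrite -(scale0r (0 : E)) onormZ normr0 mul0r. Qed.

Lemma onormB x y : N (x - y) <= N x + N y.
Proof. by rewrite -[N y]mul1r -normrN1 -onormZ scaleN1r onormD. Qed.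

Lemma cone0 : P 0. Proof. by case: HE => _ -[]. Qed.
Lemma coneD x y : P x -> P y -> P (x + y).
Proof. by case: HE => _ -[_ + _ _] _ _; apply. Qed.

Lemma coneZ (a : R) x : 0 <= a -> P x -> P (a *: x).
Proof. by case: HE => _ -[_ _ + _] _ _; apply. Qed.

Lemma cone_normalize y : P y -> exists u, [/\ P u, N u <= 1 & y = N y *: u].
Proof.
move=> Py; exists ((N y)^-1 *: y); split.
- by apply: coneZ; rewrite ?invr_ge0 ?onorm_ge0.
- have [y0|yn0] := eqVneq (N y) 0; first by rewrite (onorm_eq0 y0) scaler0 onorm0 ler01.
  by rewrite onormZ ger0_norm ?invr_ge0 ?onorm_ge0 // mulVf.
- have [y0|yn0] := eqVneq (N y) 0; first by rewrite (onorm_eq0 y0) !scaler0.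
  by rewrite scalerA mulfV // scale1r.
Qed.

Definition decomp_costs x := [set r | exists y z : E,
  [/\ P y, P z, x = y - z & r = N y + N z]].

Lemma decomp_costs_neq0 x : decomp_costs x !=set0.
Proof. by case: HE => _ _ /(_ x)[y [z [Py Pz ->]]] _; exists (N y + N z), y, z. Qed.

Lemma decomp_costs_ge0 x : lbound (decomp_costs x) 0.
Proof. by move=> _ [y [z [_ _ _ ->]]]; rewrite addr_ge0 ?onorm_ge0. Qed.

Lemma pnorm_ge0 x : 0 <= pnorm x.
Proof. by apply: lb_le_inf; [exact: decomp_costs_neq0 | exact: decomp_costs_ge0]. Qed.

Lemma onorm_le_pnorm x : N x <= pnorm x.
Proof.
apply: lb_le_inf; first exact: decomp_costs_neq0.
by move=> _ [y [z [_ _ -> ->]]]; exact: onormB.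
Qed.

Lemma pnorm_le_decomp x y z : P y -> P z -> x = y - z -> pnorm x <= N y + N z.
Proof.
move=> Py Pz xyz; apply: ge_inf; first by exists 0; exact: decomp_costs_ge0.
by exists y, z.
Qed.

Lemma pnorm_approx x (e : R) : 0 < e -> exists y z : E,
  [/\ P y, P z, x = y - z & N y + N z < pnorm x + e].
Proof.
move=> e0; have hx : has_inf (decomp_costs x).
  by split; [exact: decomp_costs_neq0 | exists 0; exact: decomp_costs_ge0].
by have [_ [y [z [Py Pz xyz ->]]] lt] := inf_adherent e0 hx; exists y, z.
Qed.

Lemma pnormZ_le (c : R) u : 0 < c -> pnorm (c *: u) <= c * pnorm u.
Proof.
move=> c0; rewrite -ler_pdivrMl //; apply: lb_le_inf; first exact: decomp_costs_neq0.
move=> _ [y [z [Py Pz -> ->]]]; rewrite ler_pdivrMl // mulrDr.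
rewrite -(gtr0_norm c0) -!onormZ gtr0_norm //.
by apply: pnorm_le_decomp; rewrite ?scalerBr //; apply: coneZ => //; exact: ltW.
Qed.

Lemma pnorm_le_cplus x : N x <= 1 -> pnorm x <= cplus E.
Proof.
move=> Nx; apply: sup_upper_bound; last by exists x.
split; first by exists (pnorm (0 : E)), 0; rewrite //= onorm0.
by case: HE => _ _ _ [C HC]; exists C => _ [y Ny <-]; exact: HC.
Qed.

Lemma cplus_ge0 : 0 <= cplus E.
Proof. by apply: le_trans (pnorm_ge0 (0 : E)) (pnorm_le_cplus _); rewrite onorm0. Qed.

Lemma pnorm_le_cplus_onorm x : pnorm x <= cplus E * N x.
Proof.
have [x0|xn0] := eqVneq (N x) 0.
  rewrite x0 mulr0 (onorm_eq0 x0).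
  by have := pnorm_le_decomp cone0 cone0 (esym (subr0 (0 : E))); rewrite onorm0 addr0.
have Nx0 : 0 < N x by rewrite lt_def xn0 onorm_ge0.
have xu : x = N x *: ((N x)^-1 *: x) by rewrite scalerA mulfV // scale1r.
rewrite [in pnorm x]xu; apply: le_trans (pnormZ_le _ Nx0) _.
rewrite mulrC ler_wpM2r ?onorm_ge0 //.
by apply: pnorm_le_cplus; rewrite onormZ ger0_norm ?invr_ge0 ?onorm_ge0 // mulVf.
Qed.

End OrderedNormedSpace.

Section Decomposable.
Variables (R : realType) (E : ons R).
Local Notation N := (@ons_norm R E).
Local Notation P := (@ons_cone R E).
Hypothesis Hn : is_norm N.
Hypothesis Hc : is_closed_convex_cone N P.
Hypothesis Hd : forall x : E, exists y z : E,
  [/\ P y, P z, x = y - z & N y + N z <= N x].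

Lemma decomposable_is_ons : is_ons E.
Proof.
split=> //; first by move=> x; have [y [z [Py Pz xyz _]]] := Hd x; exists y, z.
exists 1 => x Nx; have [y [z [Py Pz xyz yz]]] := Hd x.
apply: le_trans Nx; apply: le_trans yz; apply: ge_inf; last by exists y, z.
by exists 0 => _ [y' [z' [_ _ _ ->]]]; case: Hn => N0 _ _ _; rewrite addr_ge0.
Qed.

Lemma decomposable_pnorm (x : E) : pnorm x = N x.
Proof.
have HE := decomposable_is_ons; apply/le_anti; rewrite onorm_le_pnorm // andbT.
by have [y [z [Py Pz xyz yz]]] := Hd x; apply: le_trans yz; exact: pnorm_le_decomp.
Qed.

End Decomposable.

Section Ratio.
Variables (R : realType) (n : nat) (E : ons R).
Hypothesis HE : is_ons E.

Lemma c_piss_le (D : R) : 0 <= D ->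
  (forall t : tensor E n, tsym t -> (pisplus_E t <= D%:E * pis_E t)%E) ->
  (c_piss n E <= D%:E)%E.
Proof.
move=> D0 H; apply: ge_ereal_sup => _ [t [ts _] <-].
have := H t ts; have : (0 <= pis_E t)%E by apply: pis_ge0; exact: onorm_ge0.
case: (pis_E t) => [r| |] //= r0 tD; last by rewrite invr0 mule0 lee_fin.
have [->|rn0] := eqVneq r 0; first by rewrite invr0 mule0 lee_fin.
by rewrite lee_pdivrMr ?lt_def ?rn0 -?lee_fin // muleC.
Qed.

Lemma pisplus_le_c_piss (t : tensor E n) (r : R) : tsym t -> ~ teq t [::] ->
  pis_E t = r%:E -> 0 < r -> (pisplus_E t <= c_piss n E * r%:E)%E.
Proof.
move=> ts tn0 tr r0; rewrite -lee_pdivrMr //; apply: ereal_sup_ubound.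
by exists t => //; rewrite tr.
Qed.

Lemma pis_Eplus_le (t : tensor E n) : 0 < cplus E ->
  (pis_Eplus t <= ((cplus E) ^+ n)%:E * pis_E t)%E.
Proof.
move=> c0; apply: le_mul_ereal_inf; first exact: exprn_gt0.
move=> s rs; apply: le_trans (pis_le_cost _ rs) _.
rewrite lee_fin /rep_cost mulr_sumr; apply: ler_sum => p _.
rewrite mulrCA ler_wpM2l // -exprMn; apply: lerXn2r; rewrite ?nnegrE ?pnorm_ge0 //.
  by rewrite mulr_ge0 ?cplus_ge0 ?onorm_ge0.
exact: pnorm_le_cplus_onorm.
Qed.

Lemma c_piss_div_cplus_le (C : R) : (0 < n)%N -> gamma_ok n C -> 0 <= C ->
  (c_piss n E * (((cplus E) ^+ n)^-1)%:E <= C%:E)%E.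
Proof.
move=> n0 HC C0; have [c0|cn0] := eqVneq (cplus E) 0.
  by rewrite c0 expr0n eqn0Ngt n0 invr0 mule0 lee_fin.
have cp : 0 < cplus E ^+ n by rewrite exprn_gt0 // lt_def cn0 cplus_ge0.
rewrite lee_pdivrMr // -EFinM; apply: c_piss_le; first by rewrite mulr_ge0 // ltW.
move=> t ts; apply: le_trans (HC E HE t ts) _.
rewrite EFinM -muleA lee_wpmul2l ?lee_fin //.
by apply: pis_Eplus_le; rewrite lt_def cn0 cplus_ge0.
Qed.

End Ratio.

Section UniversalSpace.
Variables (R : realType) (n : nat) (U : ons R).
Hypothesis n0 : (0 < n)%N.
Hypothesis HU : is_ons U.
Local Notation NU := (@ons_norm R U).
Local Notation PU := (@ons_cone R U).
Hypothesis pnormU : forall w : U, pnorm w = NU w.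
Variables (f : bool -> U -> R) (e : bool -> U).
Hypothesis f_lin : forall i, lin (f i).
Hypothesis f_ge0 : forall i w, PU w -> 0 <= f i w.
Hypothesis f_onorm : forall w, `|f false w| + `|f true w| <= NU w.
Hypothesis e_onorm : forall i, NU (e i) <= 1.
Hypothesis f_e : forall i j, f i (e j) = (i == j)%:R.

Lemma f_le_onorm i w : `|f i w| <= NU w.
Proof. by case: i; apply: le_trans (f_onorm w); rewrite ?lerDl ?lerDr. Qed.

Let te := powt n [:: (1%R, e false)].

Lemma pis_powt_e : pis_E te = 1%:E.
Proof.
apply/le_anti/andP; split.
  apply: le_trans (pis_powt1_le n NU (Q := setT) I) _.
  by rewrite lee_fin exprn_ile1 ?onorm_ge0.
by have := pis_powt1_ge n setT (e false) (f_lin false) (f_le_onorm false);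
  rewrite f_e normr1 expr1n.
Qed.

Lemma pisplus_powt_e_ge1 : (1%:E <= pisplus_E te)%E.
Proof.
by have := pis_powt1_ge n PU (e false) (f_lin false) (f_le_onorm false);
  rewrite f_e normr1 expr1n.
Qed.

Lemma powt_neq0 (w : U) i : f i w != 0 -> ~ teq (powt n [:: (1%R, w)]) [::].
Proof.
move=> fw0 /(_ (fun=> f i) (fun=> f_lin i)); rewrite tform_powt1 /tform big_nil.
by apply/eqP; rewrite expf_neq0.
Qed.

Lemma c_piss_ge1 : (1%:E <= c_piss n U)%E.
Proof.
apply: le_trans pisplus_powt_e_ge1 _; rewrite -[c_piss n U]mule1.
apply: pisplus_le_c_piss pis_powt_e ltr01; first exact: tsym_powt.
by apply: (powt_neq0 (i := false)); rewrite f_e oner_neq0.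
Qed.

Lemma pis_Eplus_universal (t : tensor U n) : pis_Eplus t = pis_E t.
Proof. by rewrite /pis_Eplus (_ : @pnorm R U = NU) //; apply: funext. Qed.

Lemma gamma_ok_ge1 (C : R) : gamma_ok n C -> 1 <= C.
Proof.
move=> HC; rewrite -lee_fin; apply: le_trans pisplus_powt_e_ge1 _.
by have := HC U HU te (tsym_powt _); rewrite pis_Eplus_universal pis_powt_e mule1.
Qed.

Lemma c_piss_le_gamma_ok (C : R) : gamma_ok n C -> (c_piss n U <= C%:E)%E.
Proof.
move=> HC; apply: c_piss_le => //; first exact: le_trans ler01 (gamma_ok_ge1 HC).
by move=> t ts; rewrite -pis_Eplus_universal; exact: HC.
Qed.

Section Lifting.
Variable E : ons R.
Hypothesis HE : is_ons E.
Local Notation N := (@ons_norm R E).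
Local Notation P := (@ons_cone R E).

Lemma lift_to_universal (x : E) (d : R) : 0 < d -> exists (w : U) (T : U -> E),
  [/\ forall (c : R) v v', T (c *: v + v') = c *: T v + T v',
      forall v, PU v -> P (T v),
      forall v, N (T v) <= NU v,
      T w = x
    & NU w <= `|f false w| + `|f true w| < pnorm x + d].
Proof.
move=> d0; have [y [z [Py Pz xyz yz]]] := pnorm_approx HE x d0.
have [u [Pu Nu yu]] := cone_normalize HE Py.
have [u' [Pu' Nu' zu']] := cone_normalize HE Pz.
pose w := N y *: e false - N z *: e true.
have f0w : f false w = N y by rewrite linB // !linZ // !f_e /=; ring.
have f1w : f true w = - N z by rewrite linB // !linZ // !f_e /=; ring.
have Ny0 := onorm_ge0 HE y; have Nz0 := onorm_ge0 HE z.
exists w, (fun v => f false v *: u + f true v *: u'); split.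
- move=> c v v'; rewrite !f_lin !scalerDl scalerDr !scalerA.
  by rewrite addrACA.
- by move=> v Pv; apply: (coneD HE); apply: (coneZ HE); rewrite ?f_ge0.
- move=> v; apply: le_trans (onormD HE _ _) _; rewrite !(onormZ HE).
  apply: le_trans (f_onorm v); apply: lerD;
    by rewrite -[X in _ <= X]mulr1 ler_wpM2l.
- by rewrite /= f0w f1w scaleNr -yu -zu'.
rewrite f0w f1w normrN !ger0_norm // yz andbT.
apply: le_trans (onormB HU _ _) _; rewrite !(onormZ HU) !ger0_norm //.
by apply: lerD; rewrite -[X in _ <= X]mulr1 ler_wpM2l.
Qed.

End Lifting.

Section AdmissibleConstant.
Variable C : R.
Hypothesis HC : (c_piss n U <= C%:E)%E.

Lemma bound_ge1 : 1 <= C.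
Proof. by rewrite -lee_fin; apply: le_trans c_piss_ge1 HC. Qed.

Lemma pisplus_powt_universal (w : U) : NU w <= `|f false w| + `|f true w| ->
  (pisplus_E (powt n [:: (1%R, w)]) <= (C * NU w ^+ n)%:E)%E.
Proof.
move=> Nw; have [-> | wn0] := eqVneq w 0.
  rewrite onorm0 // expr0n eqn0Ngt n0 mulr0; apply: pis_teq0; exact: teq_powt0.
have [i fi] : exists i, f i w != 0.
  have [f0|] := eqVneq (f false w) 0; last by exists false.
  have [f1|] := eqVneq (f true w) 0; last by exists true.
  move: Nw; rewrite f0 f1 normr0 addr0 => Nw.
  have w0 : NU w = 0 by apply/le_anti; rewrite Nw onorm_ge0.
  by rewrite (onorm_eq0 HU w0) eqxx in wn0.
set t := powt n [:: (1%R, w)].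
have lb := pis_powt1_ge n setT w (f_lin i) (f_le_onorm i).
have ub := pis_powt1_le n NU (Q := setT) (w := w) I.
move: lb ub; rewrite -/t -/(pis_E t); case ht: (pis_E t) => [r| |] //.
rewrite !lee_fin => lb ub.
have r0 : 0 < r by apply: lt_le_trans lb; rewrite exprn_gt0 ?normr_gt0.
apply: le_trans (pisplus_le_c_piss (tsym_powt _) (powt_neq0 fi) ht r0) _.
apply: le_trans (lee_wpmul2r _ HC) _; first by rewrite lee_fin ltW.
by rewrite -EFinM lee_fin ler_wpM2l // (le_trans ler01 bound_ge1).
Qed.

Lemma pisplus_powt1_le (E : ons R) (x : E) : is_ons E ->
  (pisplus_E (powt n [:: (1%R, x)]) <= (C * pnorm x ^+ n)%:E)%E.
Proof.
move=> HE; have C0 : 0 <= C := le_trans ler01 bound_ge1.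
apply: (lee_exprD_limit (pnorm_ge0 HE x) C0) => d d0.
have [w [T [Tlin Tpos Tcontr <- /andP[Nw wd]]]] := lift_to_universal HE x d0.
apply: le_trans (pis_map_le n (onorm_ge0 HE) Tlin Tpos Tcontr [:: (1%R, w)]) _.
apply: le_trans (pisplus_powt_universal Nw) _; rewrite lee_fin ler_wpM2l //.
rewrite lerXn2r ?nnegrE ?(onorm_ge0 HU) ?addr_ge0 ?(pnorm_ge0 HE) ?ltW //.
exact: le_lt_trans Nw wd.
Qed.

Lemma gamma_ok_of_c_piss_le : gamma_ok n C.
Proof.
move=> E HE t ts; apply: le_mul_ereal_inf; first exact: lt_le_trans ltr01 bound_ge1.
move=> s [_ st]; rewrite /pisplus_E -(pis_teq _ _ st).
apply: le_trans (pis_powt_le (B := fun x => C * pnorm x ^+ n) _) _.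
  by move=> p _; exact: pisplus_powt1_le.
by rewrite lee_fin /rep_cost mulr_sumr; apply: ler_sum => p _; rewrite mulrCA.
Qed.

End AdmissibleConstant.

Lemma c_piss_universal : c_piss n U = gamma R n.
Proof.
apply/le_anti/andP; split.
  by apply: le_ereal_inf_tmp => _ [C HC <-]; exact: c_piss_le_gamma_ok.
move: c_piss_ge1; case hc: (c_piss n U) => [r| |] // _; last by rewrite leey.
by apply: ereal_inf_lbound; exists r => //; apply: gamma_ok_of_c_piss_le; rewrite hc.
Qed.

Lemma cplus_universal : cplus U = 1.
Proof.
apply/le_anti/andP; split.
  apply: ge_sup; first by exists (pnorm (0 : U)), 0; rewrite //= onorm0.
  by move=> _ [w Nw <-]; rewrite pnormU.
apply: le_trans (pnorm_le_cplus HU (e_onorm false)); rewrite pnormU.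
by apply: le_trans (f_le_onorm false _); rewrite f_e normr1.
Qed.

End UniversalSpace.

Section L1m.
Variables (R : realType) (m : nat).
Hypothesis m2 : (2 <= m)%N.
Local Notation E := (l1m R m).
Local Notation N := (@ons_norm R E).
Local Notation P := (@ons_cone R E).

Lemma l1m_coord_le (x : E) i : `|x ord0 i| <= N x.
Proof. by rewrite /= (bigD1 i) //= lerDl sumr_ge0. Qed.

Lemma l1m_norm : is_norm N.
Proof.
split=> [x|x x0|a x|x y]; first exact: sumr_ge0.
- apply/rowP => i; rewrite mxE; apply/normr0_eq0/le_anti.
  by rewrite normr_ge0 -x0 l1m_coord_le.
- by rewrite /= mulr_sumr; apply: eq_bigr => i _; rewrite mxE normrM.
- by rewrite /= -big_split; apply: ler_sum => i _; rewrite mxE ler_normD.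
Qed.

Lemma l1m_cone : is_closed_convex_cone N P.
Proof.
split=> [i|x y Px Py i|a x a0 Px i|x Hx i]; rewrite ?mxE.
- by [].
- by rewrite addr_ge0.
- by rewrite mulr_ge0.
apply: ge0_of_approx_ge0 => e e0; have [p Pp xp] := Hx e e0.
exists (p ord0 i) => //; apply: le_lt_trans xp.
by have := l1m_coord_le (x - p) i; rewrite !mxE.
Qed.

Lemma l1m_decomp (x : E) : exists y z : E, [/\ P y, P z, x = y - z & N y + N z <= N x].
Proof.
exists (map_mx (@pos_part R) x), (map_mx (@neg_part R) x); split.
- by move=> i; rewrite mxE; case: (pos_neg_part (x ord0 i)).
- by move=> i; rewrite mxE; case: (pos_neg_part (x ord0 i)).
- by apply/rowP => i; rewrite !mxE; case: (pos_neg_part (x ord0 i)).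
rewrite /= -big_split; apply: ler_sum => i _; rewrite !mxE.
by case: (pos_neg_part (x ord0 i)) => p0 q0 _ <-; rewrite !ger0_norm.
Qed.

Lemma l1m_is_ons : is_ons E.
Proof. exact: decomposable_is_ons l1m_norm l1m_cone l1m_decomp. Qed.

Lemma l1m_pnorm (x : E) : pnorm x = N x.
Proof. exact: (decomposable_pnorm l1m_norm l1m_cone l1m_decomp x). Qed.

Definition l1m_idx (b : bool) : 'I_m := Ordinal (leq_ltn_trans (leq_b1 b) m2).
Definition l1m_coord (b : bool) (x : E) := x ord0 (l1m_idx b).
Definition l1m_unit (b : bool) : E := \row_j (j == l1m_idx b)%:R.

Lemma l1m_coord_lin b : lin (l1m_coord b).
Proof. by move=> a x y; rewrite /l1m_coord !mxE. Qed.

Lemma l1m_coord_ge0 b (x : E) : P x -> 0 <= l1m_coord b x.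
Proof. exact. Qed.

Lemma l1m_coord_onorm (x : E) : `|l1m_coord false x| + `|l1m_coord true x| <= N x.
Proof.
by rewrite /= (bigD1 (l1m_idx false)) // (bigD1 (l1m_idx true)) //= addrA lerDl sumr_ge0.
Qed.

Lemma l1m_unit_onorm b : N (l1m_unit b) <= 1.
Proof.
rewrite /= (bigD1 (l1m_idx b)) //= big1 ?mxE ?eqxx ?normr1 ?addr0 //.
by move=> j /negbTE jb; rewrite mxE jb normr0.
Qed.

Lemma l1m_coord_unit b b' : l1m_coord b (l1m_unit b') = (b == b')%:R.
Proof. by rewrite /l1m_coord mxE; case: b; case: b'. Qed.

Lemma l1m_c_piss n : (0 < n)%N -> c_piss n E = gamma R n.
Proof.
move=> n0; exact: (c_piss_universal n0 l1m_is_ons l1m_pnorm (f := l1m_coord)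
  (e := l1m_unit) l1m_coord_lin l1m_coord_ge0 l1m_coord_onorm l1m_unit_onorm
  l1m_coord_unit).
Qed.

Lemma l1m_cplus : cplus E = 1.
Proof.
exact: (cplus_universal l1m_is_ons l1m_pnorm (f := l1m_coord) (e := l1m_unit)
  l1m_coord_onorm l1m_unit_onorm l1m_coord_unit).
Qed.

Lemma l1m_gamma_ok_ge1 n (C : R) : gamma_ok n C -> 1 <= C.
Proof.
exact: (gamma_ok_ge1 l1m_is_ons l1m_pnorm (f := l1m_coord) (e := l1m_unit)
  l1m_coord_lin l1m_coord_onorm l1m_unit_onorm l1m_coord_unit).
Qed.

End L1m.

Section L1.
Variable R : realType.
Local Notation E := (l1 R).
Local Notation N := (@ons_norm R E).
Local Notation P := (@ons_cone R E).

Definition psum (x : nat -> R) (K : nat) := \sum_(k < K) `|x k|.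

Lemma psum_mono x : {homo psum x : K K' / (K <= K')%N >-> K <= K'}.
Proof.
move=> K K' /subnK <-; elim: (K' - K)%N => [|j IH]; first by rewrite add0n.
by apply: le_trans IH _; rewrite addSn /psum big_ord_recr lerDl.
Qed.

Lemma psum_bounded_l1 (x : nat -> R^o) (B : R) :
  (forall K, psum x K <= B) -> x \in @l1pred R.
Proof. by move=> xB; rewrite unfold_in; apply/asboolP; exists B. Qed.

Lemma l1_psum_bounded (x : E) : exists B, forall K, psum (l1val x) K <= B.
Proof. by have := valP x; rewrite /= unfold_in => /asboolP. Qed.

Lemma l1_psum_le (x : E) K : psum (l1val x) K <= N x.
Proof.
apply: sup_upper_bound; last by exists K.
split; first by exists (psum (l1val x) 0), 0.
by have [B xB] := l1_psum_bounded x; exists B => _ [K' _ <-]; exact: xB.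
Qed.

Lemma l1_onorm_le (x : E) (B : R) : (forall K, psum (l1val x) K <= B) -> N x <= B.
Proof.
move=> xB; apply: ge_sup; first by exists (psum (l1val x) 0), 0.
by move=> _ [K _ <-]; exact: xB.
Qed.

Lemma l1_coord_le (x : E) k : `|l1val x k| <= N x.
Proof.
by apply: le_trans (l1_psum_le x k.+1); rewrite /psum big_ord_recr lerDr sumr_ge0.
Qed.

Lemma l1_norm : is_norm N.
Proof.
have N0 x : 0 <= N x by apply: le_trans (l1_psum_le x 0); rewrite /psum big_ord0.
have psumZ a x K : psum (l1val (a *: x)) K = `|a| * psum (l1val x) K.
  by rewrite /psum mulr_sumr; apply: eq_bigr => k _; rewrite -normrM.
split=> [//|x x0|a x|x y].
- apply: val_inj; apply: funext => k /=; apply/normr0_eq0/le_anti.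
  by rewrite normr_ge0 -x0 l1_coord_le.
- apply/le_anti/andP; split.
    by apply: l1_onorm_le => K; rewrite psumZ ler_wpM2l // l1_psum_le.
  have [->|an0] := eqVneq a 0; first by rewrite normr0 mul0r.
  have a0 : 0 < `|a| by rewrite normr_gt0.
  rewrite mulrC -ler_pdivlMr //; apply: l1_onorm_le => K.
  by rewrite ler_pdivlMr // mulrC -psumZ l1_psum_le.
- apply: l1_onorm_le => K; apply: le_trans (lerD (l1_psum_le x K) (l1_psum_le y K)).
  by rewrite /psum -big_split; apply: ler_sum => k _; exact: ler_normD.
Qed.

Lemma l1_cone : is_closed_convex_cone N P.
Proof.
split=> [k|x y Px Py k|a x a0 Px k|x Hx k] //=.
- by rewrite addr_ge0.
- by rewrite mulr_ge0.
apply: ge0_of_approx_ge0 => e e0; have [p Pp xp] := Hx e e0.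
by exists (l1val p k) => //; apply: le_lt_trans xp; exact: (l1_coord_le (x - p) k).
Qed.

Lemma l1_decomp (x : E) : exists y z : E, [/\ P y, P z, x = y - z & N y + N z <= N x].
Proof.
have [B xB] := l1_psum_bounded x.
have [yl1 zl1] : (fun k => pos_part (l1val x k)) \in @l1pred R /\
                 (fun k => neg_part (l1val x k)) \in @l1pred R.
  by split; apply: (psum_bounded_l1 (B := B)) => K; apply: le_trans (xB K);
    apply: ler_sum => k _; case: (pos_neg_part (l1val x k)) => p0 q0 _ <-;
    rewrite ?ger0_norm // ?lerDl ?lerDr.
exists (L1 yl1), (L1 zl1); split=> [k|k||].
- by case: (pos_neg_part (l1val x k)).
- by case: (pos_neg_part (l1val x k)).
- by apply: val_inj; apply: funext => k /=; case: (pos_neg_part (l1val x k)).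
have psum_yz K : psum (l1val (L1 yl1)) K + psum (l1val (L1 zl1)) K = psum (l1val x) K.
  rewrite /psum -big_split; apply: eq_bigr => k _ /=.
  by case: (pos_neg_part (l1val x k)) => p0 q0 _ <-; rewrite !ger0_norm.
suff : N (L1 zl1) <= N x - N (L1 yl1) by lra.
apply: l1_onorm_le => K'.
suff : N (L1 yl1) <= N x - psum (l1val (L1 zl1)) K' by lra.
apply: l1_onorm_le => K; have := l1_psum_le x (maxn K K'); rewrite -psum_yz.
have := psum_mono (l1val (L1 yl1)) (leq_maxl K K').
have := psum_mono (l1val (L1 zl1)) (leq_maxr K K').
lra.
Qed.

Lemma l1_is_ons : is_ons E.
Proof. exact: decomposable_is_ons l1_norm l1_cone l1_decomp. Qed.

Lemma l1_pnorm (x : E) : pnorm x = N x.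
Proof. exact: (decomposable_pnorm l1_norm l1_cone l1_decomp x). Qed.

Definition l1_coord (b : bool) (x : E) := l1val x b.

Definition indicator (j : nat) : nat -> R^o := fun k => (k == j)%:R.

Lemma psum_indicator j K : psum (indicator j) K <= 1.
Proof.
have ind0 (k : nat) : k != j -> `|indicator j k| = 0.
  by rewrite /indicator => /negbTE ->; rewrite normr0.
have [jK|Kj] := ltnP j K.
  rewrite /psum (bigD1 (Ordinal jK)) //= big1 => [|k kj].
    by rewrite /indicator eqxx normr1 addr0.
  by rewrite ind0 //; apply: contraNneq kj => kj; apply: val_inj.
rewrite /psum big1 ?ler01 // => k _.
by rewrite ind0 // ltn_eqF // (leq_trans (ltn_ord k)).
Qed.

Definition l1_unit (b : bool) : E := L1 (psum_bounded_l1 (psum_indicator b)).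

Lemma l1_coord_lin b : lin (l1_coord b). Proof. by []. Qed.

Lemma l1_coord_ge0 b (x : E) : P x -> 0 <= l1_coord b x.
Proof. exact. Qed.

Lemma l1_coord_onorm (x : E) : `|l1_coord false x| + `|l1_coord true x| <= N x.
Proof.
by apply: le_trans (l1_psum_le x 2); rewrite /psum !big_ord_recr big_ord0 /= add0r.
Qed.

Lemma l1_unit_onorm b : N (l1_unit b) <= 1.
Proof. by apply: l1_onorm_le; exact: psum_indicator. Qed.

Lemma l1_coord_unit b b' : l1_coord b (l1_unit b') = (b == b')%:R.
Proof. by case: b; case: b'. Qed.

Lemma l1_c_piss n : (0 < n)%N -> c_piss n E = gamma R n.
Proof.
move=> n0; exact: (c_piss_universal n0 l1_is_ons l1_pnorm (f := l1_coord)
  (e := l1_unit) l1_coord_lin l1_coord_ge0 l1_coord_onorm l1_unit_onorm l1_coord_unit).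
Qed.

End L1.

Section Suprema.
Variables (R : realType) (n : nat).

Lemma sup_ratio_le_gamma : (0 < n)%N -> (forall C : R, gamma_ok n C -> 0 <= C) ->
  (sup_ratio R n <= gamma R n)%E.
Proof.
move=> n0 HC0; apply: ge_ereal_sup => _ [E [HE ->]].
by apply: le_ereal_inf_tmp => _ [C HC <-]; apply: c_piss_div_cplus_le => //; exact: HC0.
Qed.

Lemma sup_cplus1_le_sup_ratio : (sup_cplus1 R n <= sup_ratio R n)%E.
Proof.
apply: ge_ereal_sup => _ [E [HE E1 ->]]; apply: ereal_sup_ubound.
by exists E; split; rewrite // E1 expr1n invr1 mule1.
Qed.

Lemma c_piss_le_sup_cplus1 (E : ons R) : is_ons E -> cplus E = 1 ->
  (c_piss n E <= sup_cplus1 R n)%E.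
Proof. by move=> HE E1; apply: ereal_sup_ubound; exists E. Qed.

End Suprema.

Theorem theorem5p3 (R : realType) (n : nat) : (0 < n)%N ->
  (forall m : nat, (2 <= m)%N -> c_piss n (l1m R m) = gamma R n) /\
  c_piss n (l1 R) = gamma R n /\
  [/\ sup_ratio R n = sup_cplus1 R n,
      sup_cplus1 R n = c_piss n (l1 R),
      c_piss n (l1 R) = c_piss n (l1m R 2)
    & c_piss n (l1m R 2) = gamma R n].
Proof.
move=> n0; have m22 : (2 <= 2)%N by [].
have c2 : c_piss n (l1m R 2) = gamma R n := l1m_c_piss R m22 n0.
have c1 : c_piss n (l1 R) = gamma R n := l1_c_piss R n0.
have ratio_le : (sup_ratio R n <= gamma R n)%E.
  by apply: (sup_ratio_le_gamma n0) => C /(l1m_gamma_ok_ge1 m22); exact: le_trans ler01.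
have cplus1_ge : (gamma R n <= sup_cplus1 R n)%E.
  by rewrite -c2; exact: c_piss_le_sup_cplus1 (l1m_is_ons R 2) (l1m_cplus R m22).
have cplus1_le := sup_cplus1_le_sup_ratio R n.
have e1 : sup_cplus1 R n = gamma R n.
  by apply/le_anti; rewrite cplus1_ge (le_trans cplus1_le ratio_le).
have e2 : sup_ratio R n = gamma R n.
  by apply/le_anti; rewrite ratio_le -e1 cplus1_le.
by split; [move=> m m2; exact: l1m_c_piss | split; [|split; congruence]].
Qed.
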